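(* Let $n\ge 1$, let $D^{n+1}\subset\mathbb{R}^{n+1}$ be the closed unit disk and $S^n=\partial D^{n+1}$ the unit sphere. Let $U_1,\ldots,U_k\subset D^{n+1}$ be the pieces of a cleavage of $D^{n+1}$ by oriented affine hyperplanes (as described in the context), let $N_i=U_i\cap S^n$, let $c_i$ be the centre of mass of $U_i$, and let $\beta=\bigcup_{i=1}^k \partial U_i$ be the blueprint, where $\partial U_i$ denotes the frontier of $U_i$ in $D^{n+1}$. For $s\in S^n\setminus N_i$ let $l(s,c_i)$ be the line segment from $s$ to $c_i$. Define $$\alpha\colon \coprod_{i=1}^k \left(S^n\setminus N_i\right)\to \beta$$ by sending $s$ in the $i$-th summand to the point of $\beta$ that lies on $l(s,c_i)$ and on the boundary $\partial U_i$. Then $\alpha$ is well defined (for each such $s$ there is exactly one such point, and it lies in $\beta$), and the restriction of $\alpha$ to any single connected component of any one of the complements $S^n\setminus N_i$ is injective.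
   Context: A cleavage of $D^{n+1}$ into $k$ pieces is obtained recursively: an oriented affine hyperplane $P$ (an element of $\mathrm{Gr}_n(\mathbb{R}^{n+1})\times\mathbb{R}$) cuts the current piece $W$ (initially $D^{n+1}$) into two closed pieces $W\cap H^+$ and $W\cap H^-$, where $H^\pm$ are the two closed half-spaces bounded by $P$ (the first piece being the one in the direction of the normal vector of $P$), each required to have nonempty interior; each of these pieces is then further cut recursively by further hyperplanes, according to a binary rooted planar tree whose $k-1$ internal vertices are decorated by the hyperplanes $P_1,\ldots,P_{k-1}$. The resulting $k$ pieces $U_1,\ldots,U_k$ (outgoing colours) are each of the form $D^{n+1}\cap H_{1}\cap\cdots\cap H_{r}$ for closed half-spaces $H_j$ bounded by some of the hyperplanes $P_1,\dots,P_{k-1}$, and have nonempty interior; their union is $D^{n+1}$ and distinct pieces meet only inside the union of the hyperplanes. The sets $N_i=U_i\cap S^n$ are the corresponding outgoing colours of the cleavage of $S^n$, and $S^n\setminus N_i$ is the complement of $N_i$ in $S^n$. *)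

From HB Require Import structures.
From mathcomp Require Import all_boot all_order all_algebra.
From mathcomp Require Import all_classical all_reals all_analysis.
Set Implicit Arguments. Unset Strict Implicit. Unset Printing Implicit Defensive.
Import Order.TTheory GRing.Theory Num.Theory.
Import numFieldNormedType.Exports.
Local Open Scope classical_set_scope.
Local Open Scope ring_scope.

Section Cleavage.
Variables (R : realType) (n : nat).
Local Notation V := 'rV[R]_n.+1.

Definition dotv (x y : V) : R := \sum_(j < n.+1) x 0 j * y 0 j.

Definition disk : set V := [set x | dotv x x <= 1].
Definition sphere : set V := [set x | dotv x x = 1].

(* an oriented affine hyperplane {x | <x,v> = a} with unit normal v:
   an element of Gr_n(R^{n+1}) (oriented) x R *)
Record ohyperplane := OHyp { hnormal : V ; hoffset : R }.
Definition hyp_ok (P : ohyperplane) : Prop := dotv (hnormal P) (hnormal P) = 1.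
Definition hplus (P : ohyperplane) : set V := [set x | hoffset P <= dotv x (hnormal P)].
Definition hminus (P : ohyperplane) : set V := [set x | dotv x (hnormal P) <= hoffset P].

(* binary rooted planar tree whose internal vertices carry hyperplanes *)
Inductive ctree := CLeaf | CNode of ohyperplane & ctree & ctree.

Fixpoint nleaves (t : ctree) : nat :=
  match t with CLeaf => 1%N | CNode _ l r => (nleaves l + nleaves r)%N end.

Fixpoint pieces (W : set V) (t : ctree) : seq (set V) :=
  match t with
  | CLeaf => [:: W]
  | CNode P l r => pieces (W `&` hplus P) l ++ pieces (W `&` hminus P) r
  end.

Fixpoint valid_cleavage (W : set V) (t : ctree) : Prop :=
  match t with
  | CLeaf => True
  | CNode P l r =>
      [/\ hyp_ok P, (interior (W `&` hplus P) !=set0),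
          (interior (W `&` hminus P) !=set0),
          valid_cleavage (W `&` hplus P) l & valid_cleavage (W `&` hminus P) r]
  end.

(* Lebesgue integral on R^{n+1}, computed as the iterated one-dimensional
   Lebesgue integrals (Fubini); used only for bounded functions with
   compact support (indicators of pieces times coordinates). *)
Fixpoint iter_int (m : nat) (g : (nat -> R) -> R) (x : nat -> R) : R :=
  match m with
  | 0%N => g x
  | m'.+1 => Rintegral (@lebesgue_measure R) setT
               (fun t => iter_int m' g (fun i => if i == m' then t else x i))
  end.

Definition integralV (h : V -> R) : R :=
  iter_int n.+1 (fun x => h (\row_(j < n.+1) x (nat_of_ord j))) (fun _ => 0).

Definition volume (U : set V) : R := integralV (\1_U).

Definition centroid (U : set V) : V :=
  \row_(j < n.+1) (integralV (fun x => x 0 j * \1_U x) / volume U).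

Definition frontier_in (D U : set V) : set V :=
  [set x | D x /\ closure U x /\ closure (D `\` U) x].

Definition segment (s c : V) : set V :=
  [set y | exists t : R, 0 <= t <= 1 /\ y = (1 - t) *: s + t *: c].

End Cleavage.

From HB Require Import structures.
From mathcomp Require Import all_boot all_order all_algebra.
From mathcomp Require Import all_classical all_reals all_analysis.
From mathcomp Require Import measurable_realfun.
From mathcomp Require Import ring lra.
Import Order.TTheory GRing.Theory Num.Theory.
Import numFieldNormedType.Exports.
Local Open Scope classical_set_scope.
Local Open Scope ring_scope.

(* Every piece of the cleavage is a cut disk: the unit disk intersected with
   finitely many closed half-spaces, with nonempty interior.  An affine function
   that is nonnegative on such a piece and positive at an interior point has a
   positive integral over it; since [volume U * (a + <c, w>)] is that integral,
   the centroid [c] satisfies every defining inequality strictly and lies in the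
   open disk.  For [s] on the sphere outside [U], the times [t] at which
   [(1 - t) s + t c] lies in [U] form an interval [[t0, 1]]: before [t0] the
   segment avoids the closed set [U], after [t0] it is strictly inside, so it
   meets the frontier exactly at [t0].  A frontier point [y] differs from [c],
   and [s] is the unique point of the sphere on the ray from [c] through [y]
   because [c] is in the open ball; hence [alpha] is injective on the whole
   complement, not only on its components. *)

Section IteratedIntegral.
Context {R : realType} {N : nat}.
Local Notation Tup := (N.-tuple R).
Local Notation leb := (@lebesgue_measure R).
Local Notation LR := (measurableTypeR R).

Definition integralR (f : R -> R) : R := Rintegral leb setT f.

Definition tuple_upd (y : Tup) (m : nat) (t : R) : Tup :=
  [tuple (if val i == m then t else tnth y i) | i < N].

Lemma tnth_tuple_upd y m t i :
  tnth (tuple_upd y m t) i = if val i == m then t else tnth y i.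
Proof. by rewrite tnth_mktuple. Qed.

Lemma measurable_tuple_upd m :
  measurable_fun setT (fun p : LR * Tup => tuple_upd p.2 m p.1).
Proof.
apply/measurable_fun_tnthP => i /=.
rewrite (_ : _ \o _ = fun p : LR * Tup => if val i == m then p.1 else tnth p.2 i).
  case: (val i == m); first exact: measurable_fst.
  exact: (measurableT_comp (measurable_tnth i) measurable_snd).
by apply/funext => p /=; rewrite tnth_tuple_upd.
Qed.

(* The tuple version of [iter_int]: tuples carry the product sigma-algebra, so
   Fubini's measurability lemma applies to it. *)
Fixpoint iter_integral (m : nat) (G : Tup -> R) (y : Tup) : R :=
  match m with
  | 0 => G y
  | m'.+1 => integralR (fun t => iter_integral m' G (tuple_upd y m' t))
  end.

Definition admissible (m : nat) (G : Tup -> R) :=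
  [/\ measurable_fun setT G, exists M, forall y, `|G y| <= M &
      forall y (i : 'I_N), (m <= i)%N -> 1 < `|tnth y i| -> G y = 0].

Lemma integralR_indic_itv (a b : R) : a <= b -> integralR (\1_`[a, b]) = b - a.
Proof.
move=> ab; rewrite /integralR /Rintegral integral_indic //= setIT.
rewrite lebesgue_measure_itv /= lte_fin.
case: (boolP (a < b)) => [//|]; rewrite -leNgt => ba.
by rewrite (@le_anti _ _ a b) ?ab ?ba ?subrr.
Qed.

Lemma integrable_indic_itvZ (c a b : R) :
  leb.-integrable setT (EFin \o (fun t => c * \1_`[a, b] t)).
Proof.
have := integrableZl measurableT c (integrable_indic_itv a b true false).
by apply: eq_integrable => // x _ /=; rewrite EFinM.
Qed.

Lemma integralR_indic_itvZ (c a b : R) : a <= b ->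
  integralR (fun t => c * \1_`[a, b] t) = c * (b - a).
Proof.
move=> ab; rewrite /integralR RintegralZl //; last exact: integrable_indic_itv.
by rewrite -/(integralR _) (integralR_indic_itv _ _ ab).
Qed.

Lemma integralR0 : integralR (fun _ => 0) = 0.
Proof. by rewrite /integralR Rintegral_cst // mul0r. Qed.

Lemma admissible_section_bound {m G} : admissible m G -> (m < N)%N ->
  exists2 M, 0 <= M & forall y t, `|G (tuple_upd y m t)| <= M * \1_`[-1, 1] t.
Proof.
move=> [_ [M bM] vanish] mN; exists M => [|y t]; first exact: le_trans (normr_ge0 _) (bM (nseq_tuple N 0)).

rewrite indicE; case: (boolP (t \in _)) => ht; first by rewrite mulr1.
rewrite mulr0 (vanish _ (Ordinal mN)) ?normr0 //= tnth_tuple_upd /= eqxx.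
rewrite ltNge ler_norml; apply/negP => h; apply: (negP ht).
by apply: mem_set; rewrite /= in_itv /= h.
Qed.

Lemma integrable_section {m G} y : admissible m G -> (m < N)%N ->
  leb.-integrable setT (EFin \o (fun t => G (tuple_upd y m t))).
Proof.
move=> gG mN; have [M M0 bM] := admissible_section_bound gG mN.
apply: (le_integrable _ _ _ (integrable_indic_itvZ M (-1) 1)) => //.
  apply/measurable_EFinP; case: gG => mG _ _.
  apply: (measurable_fun_pair1 (f := fun p : LR * Tup => G (tuple_upd p.2 m p.1))).
  exact: measurableT_comp mG (measurable_tuple_upd m).
move=> t _ /=; rewrite !lee_fin (ger0_norm (mulr_ge0 M0 _)) //; exact: bM.
Qed.

Lemma measurable_section_integral m G : admissible m G -> (m < N)%N ->
  measurable_fun setT (fun y => integralR (fun t => G (tuple_upd y m t))).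
Proof.
move=> gG mN; have [mG _ _] := gG.
pose H := fun p : LR * Tup => G (tuple_upd p.2 m p.1).
have mH : measurable_fun setT H := measurableT_comp mG (measurable_tuple_upd m).
have mHp : measurable_fun setT (EFin \o funrpos H).
  by apply/measurable_EFinP; exact: measurable_funrpos.
have mHn : measurable_fun setT (EFin \o funrneg H).
  by apply/measurable_EFinP; exact: measurable_funrneg.
have Hp0 p : (0 <= (EFin \o funrpos H) p)%E by rewrite lee_fin funrpos_ge0.
have Hn0 p : (0 <= (EFin \o funrneg H) p)%E by rewrite lee_fin funrneg_ge0.
have mFp := measurable_fun_fubini_tonelli_G (m1 := leb) _ mHp Hp0.
have mFn := measurable_fun_fubini_tonelli_G (m1 := leb) _ mHn Hn0.
rewrite (_ : (fun y => _) = (fun y => fine (fubini_G leb (EFin \o funrpos H) y)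
                                 - fine (fubini_G leb (EFin \o funrneg H) y))).
  by apply: measurable_funB; apply: measurableT_comp (fine_measurable measurableT) _.
apply/funext => y; have iy := integrable_section y gG mN.
rewrite -[in LHS](funrposBneg (fun t => G (tuple_upd y m t))) /integralR.
by rewrite RintegralB //; [apply: integrable_funrpos | apply: integrable_funrneg].
Qed.

Lemma admissible_integral m G : admissible m G -> (m < N)%N ->
  admissible m.+1 (fun y => integralR (fun t => G (tuple_upd y m t))).
Proof.
move=> gG mN; split; first exact: measurable_section_integral.
- have [M M0 bM] := admissible_section_bound gG mN.
  exists (M * 2) => y; have iy := integrable_section y gG mN.
  apply: le_trans (le_normr_Rintegral _ _) _ => //.
  have -> : M * 2 = integralR (fun t => M * \1_`[-1, 1] t).
    by rewrite integralR_indic_itvZ; [ring | lra].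
  apply: le_Rintegral => //; [exact: integrable_norm | exact: integrable_indic_itvZ].
- have [_ _ vanish] := gG; move=> y i mi hi.
  rewrite (_ : (fun t => _) = fun _ => 0) ?integralR0 //.
  apply/funext => t; apply: (vanish _ i) => //; first exact: ltnW.
  by rewrite tnth_tuple_upd; case: eqP => // E; move: mi; rewrite E ltnn.
Qed.

Lemma admissible_iter_integral {m G} : admissible 0 G -> (m <= N)%N ->
  admissible m (iter_integral m G).
Proof.
move=> gG; elim: m => [//|m IH] mN.
exact: admissible_integral (IH (ltnW mN)) mN.
Qed.

Lemma admissible0 m : admissible m (fun _ => 0).
Proof. by split; [exact: measurable_cst | exists 0 => y; rewrite normr0 |]. Qed.

Lemma admissibleD m G1 G2 : admissible m G1 -> admissible m G2 ->
  admissible m (fun y => G1 y + G2 y).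
Proof.
move=> [mG1 [M1 bM1] v1] [mG2 [M2 bM2] v2]; split; first exact: measurable_funD.
- by exists (M1 + M2) => y; apply: le_trans (ler_normD _ _) (lerD _ _).
- by move=> y i mi hi; rewrite (v1 y i) // (v2 y i) // addr0.
Qed.

Lemma admissibleZ m c G : admissible m G -> admissible m (fun y => c * G y).
Proof.
move=> [mG [M bM] v]; split; first exact: measurable_funM.
- by exists (`|c| * M) => y; rewrite normrM ler_wpM2l.
- by move=> y i mi hi; rewrite (v y i) // mulr0.
Qed.

Lemma admissible_sum m (I : Type) (r : seq I) (Gs : I -> Tup -> R) :
  (forall i, admissible m (Gs i)) -> admissible m (fun y => \sum_(i <- r) Gs i y).
Proof.
move=> gGs; elim: r => [|a r IH].
  by under eq_fun do rewrite big_nil; exact: admissible0.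
by under eq_fun do rewrite big_cons; exact: admissibleD.
Qed.

Lemma iter_integralD m G1 G2 : admissible 0 G1 -> admissible 0 G2 -> (m <= N)%N ->
  forall y, iter_integral m (fun z => G1 z + G2 z) y
            = iter_integral m G1 y + iter_integral m G2 y.
Proof.
move=> g1 g2; elim: m => [//|m IH] mN y /=.
under eq_fun do rewrite IH ?(ltnW mN) //.
rewrite /integralR RintegralD //.
  exact: integrable_section (admissible_iter_integral g1 (ltnW mN)) mN.
exact: integrable_section (admissible_iter_integral g2 (ltnW mN)) mN.
Qed.

Lemma iter_integralZ m c G : admissible 0 G -> (m <= N)%N ->
  forall y, iter_integral m (fun z => c * G z) y = c * iter_integral m G y.
Proof.
move=> gG; elim: m => [//|m IH] mN y /=.
under eq_fun do rewrite IH ?(ltnW mN) //.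
rewrite /integralR RintegralZl //.
exact: integrable_section (admissible_iter_integral gG (ltnW mN)) mN.
Qed.

Lemma iter_integral0 m y : iter_integral m (fun _ => 0) y = 0.
Proof.
elim: m y => [//|m IH] y /=.
by under eq_fun do rewrite IH; exact: integralR0.
Qed.

Lemma iter_integral_sum m (I : Type) (r : seq I) (Gs : I -> Tup -> R) y :
  (forall i, admissible 0 (Gs i)) -> (m <= N)%N ->
  iter_integral m (fun z => \sum_(i <- r) Gs i z) y
  = \sum_(i <- r) iter_integral m (Gs i) y.
Proof.
move=> gGs mN; elim: r => [|a r IH].
  by under eq_fun do rewrite big_nil; rewrite big_nil iter_integral0.
under eq_fun do rewrite big_cons.
by rewrite big_cons -IH iter_integralD //; exact: admissible_sum.
Qed.

Lemma iter_integral_ge0 G : (forall z, 0 <= G z) ->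
  forall m y, 0 <= iter_integral m G y.
Proof.
move=> G0; elim=> [//|m IH] y /=.
by apply: Rintegral_ge0 => t _; exact: IH.
Qed.

(* Induction on the number of integrated coordinates: a lower bound [eps] on
   the box [a, b] yields the lower bound [eps * prod (b i - a i)]. *)
Lemma iter_integral_box_gt0 G (a b : 'I_N -> R) eps :
  admissible 0 G -> (forall z, 0 <= G z) -> (forall i, a i < b i) -> 0 < eps ->
  (forall z, (forall i, a i <= tnth z i <= b i) -> eps <= G z) ->
  forall m, (m <= N)%N -> exists2 d, 0 < d &
    forall y, (forall i : 'I_N, (m <= i)%N -> a i <= tnth y i <= b i) ->
      d <= iter_integral m G y.
Proof.
move=> gG G0 ab e0 Ge; elim=> [|m IH] mN.
  by exists eps => // y hy; apply: Ge => i; exact: hy.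
have [d d0 hd] := IH (ltnW mN).
pose i0 := Ordinal mN.
exists (d * (b i0 - a i0)); first by rewrite mulr_gt0 // subr_gt0.
move=> y hy /=.
rewrite -integralR_indic_itvZ; last exact: ltW.
apply: le_Rintegral => //; first exact: integrable_indic_itvZ.
  exact: integrable_section (admissible_iter_integral gG (ltnW mN)) mN.
move=> t _ /=; rewrite indicE.
case: (boolP (t \in _)) => ht; last by rewrite mulr0; exact: iter_integral_ge0.
rewrite mulr1; apply: hd => i mi; rewrite tnth_tuple_upd.
case: eqP => E.
  have -> : i = i0 by apply: val_inj.
  by move/set_mem: ht; rewrite /= in_itv.

by apply: hy; rewrite ltn_neqAle mi andbT; apply/eqP => E'; apply: E; rewrite E'.
Qed.

End IteratedIntegral.

Section DotProduct.
Context {R : realType} {n : nat}.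
Local Notation V := 'rV[R]_n.+1.
Implicit Types (x y z w : V).

Lemma dotvC x y : dotv x y = dotv y x.
Proof. by apply: eq_bigr => j _; rewrite mulrC. Qed.

Lemma dotvDl x y z : dotv (x + y) z = dotv x z + dotv y z.
Proof. by rewrite /dotv -big_split; apply: eq_bigr => j _; rewrite mxE mulrDl. Qed.

Lemma dotvZl (a : R) x z : dotv (a *: x) z = a * dotv x z.
Proof. by rewrite /dotv mulr_sumr; apply: eq_bigr => j _; rewrite mxE mulrA. Qed.

Lemma dotvNl x z : dotv (- x) z = - dotv x z.
Proof. by rewrite -scaleN1r dotvZl mulN1r. Qed.

Lemma dotvBl x y z : dotv (x - y) z = dotv x z - dotv y z.
Proof. by rewrite dotvDl dotvNl. Qed.

Lemma dotvDr x y z : dotv z (x + y) = dotv z x + dotv z y.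
Proof. by rewrite dotvC dotvDl !(dotvC z). Qed.

Lemma dotvZr (a : R) x z : dotv z (a *: x) = a * dotv z x.
Proof. by rewrite dotvC dotvZl dotvC. Qed.

Lemma dotvNr x z : dotv z (- x) = - dotv z x.
Proof. by rewrite dotvC dotvNl dotvC. Qed.

Lemma dotvBr x y z : dotv z (x - y) = dotv z x - dotv z y.
Proof. by rewrite dotvDr dotvNr. Qed.

Lemma dotv0r z : dotv z 0 = 0.
Proof. by rewrite -(scale0r 0) dotvZr mul0r. Qed.

Lemma dotv0l z : dotv 0 z = 0.
Proof. by rewrite dotvC dotv0r. Qed.

Lemma dotv_ge0 x : 0 <= dotv x x.
Proof. by apply: sumr_ge0 => j _; rewrite -expr2 sqr_ge0. Qed.

Lemma dotv2_le x y : 2 * dotv x y <= dotv x x + dotv y y.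
Proof.
have := dotv_ge0 (x - y); rewrite !dotvBl !dotvBr (dotvC y x); lra.
Qed.

Lemma coord_le1 x j : dotv x x <= 1 -> `|x 0 j| <= 1.
Proof.
move=> x1; have : x 0 j ^+ 2 <= 1.
  apply: le_trans x1; rewrite /dotv (bigD1 j) //= -expr2 lerDl.
  by apply: sumr_ge0 => k _; rewrite -expr2 sqr_ge0.
by rewrite ler_norml; set a := x 0 j => a1; apply/andP; split; nra.
Qed.

Lemma dotv_lipschitz x y w (e : R) : (forall j, `|x 0 j - y 0 j| <= e) ->
  `|dotv x w - dotv y w| <= e * \sum_(j < n.+1) `|w 0 j|.
Proof.
move=> xy; rewrite -dotvBl /dotv mulr_sumr.
apply: le_trans (ler_norm_sum _ _ _) _; apply: ler_sum => j _.
by rewrite normrM ler_wpM2r // !mxE; exact: xy.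
Qed.

(* The balls of ['rV_n.+1] are those of the sup norm. *)
Lemma coord_ball x y e : 0 < e -> (forall j, `|x 0 j - y 0 j| < e) -> ball x e y.
Proof. by move=> e0 xy; split => // i j; rewrite (ord1 i); exact: xy. Qed.

Lemma ball_coord x y e : ball x e y -> forall j, `|x 0 j - y 0 j| < e.
Proof. by case=> _ xy j; exact: xy. Qed.

Lemma dotv_lt_near (y w : V) b : dotv y w < b ->
  exists2 e, 0 < e & forall z, ball y e z -> dotv z w < b.
Proof.
move=> yb; set S := \sum_(j < n.+1) `|w 0 j|; set B := b - dotv y w.
have S0 : 0 <= S by exact: sumr_ge0.
have S1 : 0 < S + 1 by lra.
have B0 : 0 < B by rewrite subr_gt0.
set e := B / (S + 1); have e0 : 0 < e by rewrite divr_gt0.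
have eSB : e * S + e = B by rewrite -{2}(mulr1 e) -mulrDr divfK ?lt0r_neq0.
exists e => // z /ball_coord yz.
have /(dotv_lipschitz _ _ w) : forall j, `|z 0 j - y 0 j| <= e.
  by move=> j; rewrite distrC ltW.
by rewrite -/S ler_norml => /andP[_]; rewrite /B in eSB; lra.
Qed.

Lemma dotv_gt_near (y w : V) b : b < dotv y w ->
  exists2 e, 0 < e & forall z, ball y e z -> b < dotv z w.
Proof.
rewrite -ltrN2 -dotvNr => /dotv_lt_near[e e0 near]; exists e => // z /near.
by rewrite dotvNr ltrN2.
Qed.

Lemma all_gt_near (y : V) (K : seq (V * R)) : all (fun p => p.2 < dotv y p.1) K ->
  exists2 e, 0 < e & forall z, ball y e z -> all (fun p => p.2 < dotv z p.1) K.
Proof.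
elim: K => [|p K IH] /=; first by exists 1.
case/andP=> /dotv_gt_near[e1 e10 near1] /IH[e2 e20 near2].
exists (Num.min e1 e2) => [|z ze]; first by rewrite lt_min e10.
apply/andP; split; [apply: near1 | apply: near2]; apply: le_ball ze.
  by rewrite ge_min lexx.
by rewrite ge_min lexx orbT.
Qed.

End DotProduct.

Section IntegralV.
Context {R : realType} {n : nat}.
Local Notation V := 'rV[R]_n.+1.
Local Notation N := n.+1.
Local Notation Tup := (N.-tuple R).
Implicit Types (y : Tup).

Definition row_of_tuple (y : Tup) : V := \row_(j < N) tnth y j.

Lemma row_of_tupleE y j : row_of_tuple y 0 j = tnth y j.
Proof. by rewrite mxE. Qed.

Lemma nth_tuple_upd y m t : (m < N)%N ->
  nth 0 (tuple_upd y m t) = fun i => if i == m then t else nth 0 y i.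
Proof.
move=> mN; apply/funext => i; case: (ltnP i N) => iN.
  by rewrite -[i]/(nat_of_ord (Ordinal iN)) -!tnth_nth tnth_tuple_upd.
rewrite !nth_default ?size_tuple //.
by case: eqP => // im; move: mN; rewrite -im ltnNge iN.
Qed.

Lemma iter_int_iter_integral g m y : (m <= N)%N ->
  iter_int m g (nth 0 y) = iter_integral m (fun z => g (nth 0 z)) y.
Proof.
elim: m y => [//|m IH] y mN /=; rewrite /integralR; congr Rintegral.
by apply/funext => t; rewrite -nth_tuple_upd // IH // ltnW.
Qed.

Lemma integralV_iter_integral (h : V -> R) :
  integralV h = iter_integral N (h \o row_of_tuple) (nseq_tuple N 0).
Proof.
rewrite /integralV (_ : (fun _ => 0) = nth 0 (nseq_tuple N (0 : R))).
  rewrite iter_int_iter_integral //; congr iter_integral; apply/funext => z /=.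
  by congr h; apply/rowP => j; rewrite !mxE (tnth_nth 0).
by apply/funext => i; rewrite nth_nseq if_same.
Qed.

Lemma measurable_dotv_row w :
  measurable_fun setT (fun z : Tup => dotv (row_of_tuple z) w).
Proof.
apply: measurable_sum => j; under eq_fun do rewrite row_of_tupleE.
by apply: measurable_funM; [exact: measurable_tnth | exact: measurable_cst].
Qed.

Lemma measurable_dotv_row2 :
  measurable_fun setT (fun z : Tup => dotv (row_of_tuple z) (row_of_tuple z)).
Proof.
apply: measurable_sum => j; under eq_fun do rewrite row_of_tupleE.
by apply: measurable_funM; exact: measurable_tnth.
Qed.

Section AffineIntegral.
Variable U : set V.
Hypothesis mU : measurable (row_of_tuple @^-1` U).
Hypothesis U_disk : U `<=` disk (R:=R) (n:=n).

Lemma admissible_mul_indic (f : V -> R) M :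
  measurable_fun setT (f \o row_of_tuple) -> (forall x, disk x -> `|f x| <= M) ->
  admissible 0 (fun z => f (row_of_tuple z) * \1_U (row_of_tuple z)).
Proof.
move=> mf fM; split.
- apply: measurable_funM => //.
  rewrite (_ : (fun z => _) = \1_(row_of_tuple @^-1` U)); first exact: measurable_indic.
  by apply/funext => z; rewrite !indicE.
- exists `|M| => z; rewrite indicE normrM.
  case: (boolP (_ \in U)) => [/set_mem /U_disk /fM zM|]; last by rewrite normr0 mulr0.
  by rewrite normr1 mulr1 (le_trans zM) ?ler_norm.
- move=> z i _ zi; rewrite indicE memNset ?mulr0 // => /U_disk /(coord_le1 _ i).
  by rewrite mxE leNgt zi.
Qed.

Lemma admissible_indic : admissible 0 (fun z => 1 * \1_U (row_of_tuple z)).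
Proof.
apply: (@admissible_mul_indic (fun=> 1) 1); first exact: measurable_cst.
by move=> x _; rewrite normr1.
Qed.

Lemma admissible_coord_indic j :
  admissible 0 (fun z => row_of_tuple z 0 j * \1_U (row_of_tuple z)).
Proof.
apply: (@admissible_mul_indic (fun x => x 0 j) 1) => [|x /coord_le1 //].
rewrite (_ : _ \o _ = fun z => tnth z j); first exact: measurable_tnth.
by apply/funext => z; rewrite /= row_of_tupleE.
Qed.

Lemma admissible_affine_indic (a : R) (w : V) :
  admissible 0 (fun z => (a + dotv (row_of_tuple z) w) * \1_U (row_of_tuple z)).
Proof.
apply: (@admissible_mul_indic (fun x => a + dotv x w) (`|a| + \sum_(j < N) `|w 0 j|)).
  by apply: measurable_funD; [exact: measurable_cst | exact: measurable_dotv_row].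
move=> x x1; apply: le_trans (ler_normD _ _) _; rewrite lerD2l.
have := @dotv_lipschitz _ _ x 0 w 1; rewrite dotv0l subr0 mul1r; apply=> j.
by rewrite mxE subr0; exact: coord_le1.
Qed.

Lemma integralV_affine_indic (a : R) (w : V) :
  integralV (fun x => (a + dotv x w) * \1_U x) =
  a * volume U + \sum_(j < N) w 0 j * integralV (fun x => x 0 j * \1_U x).
Proof.
have affineE : (fun x => (a + dotv x w) * \1_U x) =
    (fun x => a * (1 * \1_U x) + \sum_(j < N) w 0 j * (x 0 j * \1_U x)).
  by apply/funext => x; rewrite /dotv mulrDl mulr_suml mul1r; congr (_ + _);
     apply: eq_bigr => j _; ring.
pose Gj j z := w 0 j * (row_of_tuple z 0 j * \1_U (row_of_tuple z)).
have gGj j : admissible 0 (Gj j) := admissibleZ _ _ _ (admissible_coord_indic j).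
rewrite /volume !integralV_iter_integral affineE /comp.
rewrite iter_integralD //; first last.
- exact: admissible_sum.
- exact: admissibleZ _ _ _ admissible_indic.
rewrite iter_integralZ //; last exact: admissible_indic.
rewrite (iter_integral_sum _ _ (index_enum 'I_N) Gj) //.
congr (_ * _ + _); first by under eq_fun do rewrite mul1r.
apply: eq_bigr => j _; rewrite iter_integralZ ?integralV_iter_integral //.
exact: admissible_coord_indic.
Qed.

(* On a small box around [x0] the integrand stays above half its value at [x0]. *)
Lemma integralV_affine_indic_gt0 (a : R) (w x0 : V) e :
  0 < e -> ball x0 e `<=` U -> (forall x, U x -> 0 <= a + dotv x w) ->
  0 < a + dotv x0 w -> 0 < integralV (fun x => (a + dotv x w) * \1_U x).
Proof.
move=> e0 ballU U_ge0; set f0 := a + dotv x0 w => f0_gt0.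
set S := \sum_(j < N) `|w 0 j|.
have S_ge0 : 0 <= S by exact: sumr_ge0.
set r := Num.min (e / 2) (f0 / (2 * (S + 1))).
have r_gt0 : 0 < r by rewrite lt_min !divr_gt0 //; nra.
have re : r <= e / 2 by rewrite ge_min lexx.
have rf : r * S <= f0 / 2.
  have : r <= f0 / (2 * (S + 1)) by rewrite ge_min lexx orbT.
  rewrite ler_pdivlMr; last by nra.
  rewrite ler_pdivlMr //; nra.
pose G z := (a + dotv (row_of_tuple z) w) * \1_U (row_of_tuple z).
have gG : admissible 0 G := admissible_affine_indic a w.
have G_ge0 z : 0 <= G z.
  rewrite /G indicE; case: (boolP (_ \in U)) => [/set_mem/U_ge0|]; last by rewrite mulr0.
  by rewrite mulr1.
have G_box z : (forall i, x0 0 i - r <= tnth z i <= x0 0 i + r) -> f0 / 2 <= G z.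
  move=> zr; have zx0 j : `|row_of_tuple z 0 j - x0 0 j| <= r.
    by rewrite row_of_tupleE ler_distl; exact: zr.
  have Uz : U (row_of_tuple z).
    apply/ballU/coord_ball => // j; rewrite distrC; apply: le_lt_trans (zx0 j) _.
    by apply: le_lt_trans re _; rewrite ltr_pdivrMr //; lra.
  rewrite /G indicE mem_set // mulr1.
  have := dotv_lipschitz _ _ w _ zx0; rewrite -/S ler_norml => /andP[+ _].
  by rewrite /f0 in rf *; lra.
have [||d d_gt0 hd] := iter_integral_box_gt0 _ _ _ _ gG G_ge0 _ _ G_box _ (leqnn N).
- by move=> i /=; lra.
- by rewrite divr_gt0.
rewrite integralV_iter_integral; apply: lt_le_trans d_gt0 (hd _ _) => i.
by rewrite leqNgt ltn_ord.
Qed.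

End AffineIntegral.
End IntegralV.

Section CutDisk.
Context {R : realType} {n : nat}.
Local Notation V := 'rV[R]_n.+1.
Local Notation N := n.+1.

(* [p = (w, b)] encodes the half-space [b <= <x, w>]. *)
Definition cut_disk (L : seq (V * R)) : set V :=
  [set x | dotv x x <= 1 /\ all (fun p => p.2 <= dotv x p.1) L].

Definition unit_normals (L : seq (V * R)) := all (fun p => dotv p.1 p.1 == 1) L.

Lemma cut_disk_sub L : cut_disk L `<=` disk (R:=R) (n:=n).
Proof. by move=> x []. Qed.

Lemma measurable_le (f : N.-tuple R -> R) c :
  measurable_fun setT f -> measurable [set z | f z <= c].
Proof.
move=> mf; have := mf measurableT _ (measurable_itv `]-oo, c]).
by rewrite setTI; congr measurable; apply/seteqP; split => z /=; rewrite in_itv.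
Qed.

Lemma measurable_cut_disk L : measurable (row_of_tuple @^-1` cut_disk L).
Proof.
elim: L => [|p L IH].
  rewrite (_ : _ @^-1` _ = [set z | dotv (row_of_tuple z) (row_of_tuple z) <= 1]).
    exact: measurable_le measurable_dotv_row2.
  by apply/seteqP; split => z /=; [case | split].
rewrite (_ : _ @^-1` _ = [set z | dotv (row_of_tuple z) (- p.1) <= - p.2] `&`
                        row_of_tuple @^-1` cut_disk L).
  by apply: measurableI IH; apply: measurable_le; exact: measurable_dotv_row.
apply/seteqP; split => z /=; rewrite dotvNr lerN2.
  by case=> z1 /andP[zp zL].
by case=> zp [z1 zL]; split => //; apply/andP.
Qed.

End CutDisk.

Section Centroid.
Context {R : realType} {n : nat}.
Local Notation V := 'rV[R]_n.+1.
Variables (L : seq (V * R)) (x0 : V) (e : R).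
Hypotheses (uL : unit_normals L) (e_gt0 : 0 < e).
Hypothesis x0_ball : ball x0 e `<=` cut_disk L.
Local Notation U := (cut_disk L).

Lemma ball_shift_half (w : V) : dotv w w <= 1 -> U (x0 + (e / 2) *: w).
Proof.
move=> w1; have e2 : 0 < e / 2 by rewrite divr_gt0.
apply/x0_ball/coord_ball => // j.
rewrite !mxE opprD addrA subrr add0r normrN normrM gtr0_norm //.
by apply: le_lt_trans (ler_wpM2l (ltW e2) (coord_le1 _ j w1)) _; rewrite mulr1; lra.
Qed.

Lemma interior_halfspace_gt p : p \in L -> p.2 < dotv x0 p.1.
Proof.
move=> pL; have p1 : dotv p.1 p.1 = 1 by apply/eqP; move/allP: uL; apply.
have [_ /allP /(_ p pL)] : U (x0 + (e / 2) *: - p.1).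
  by apply: ball_shift_half; rewrite dotvNl dotvNr opprK p1.
rewrite /= dotvDl dotvZl dotvNl p1; have : 0 < e / 2 by rewrite divr_gt0.
lra.
Qed.

Lemma interior_open_disk : dotv x0 x0 < 1.
Proof.
have [x01 _] : U x0 by apply: x0_ball; exact: ballxx.
have [] := ball_shift_half x0 x01.
rewrite dotvDl !dotvDr !dotvZl !dotvZr; have : 0 < e / 2 by rewrite divr_gt0.
move: x01; set q := dotv x0 x0; set d := e / 2 => x01 d0 h _.
have q0 : 0 <= q := dotv_ge0 x0.
nra.
Qed.

Let mU := measurable_cut_disk L.
Let U_disk := @cut_disk_sub R n L.

Lemma volume_cut_disk_gt0 : 0 < volume U.
Proof.
have := integralV_affine_indic_gt0 _ mU U_disk 1 0 x0 _ e_gt0 x0_ball.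
rewrite integralV_affine_indic // mul1r big1 => [|j _]; last by rewrite mxE mul0r.
by rewrite addr0; apply=> [x _|]; rewrite dotv0r addr0.
Qed.

Lemma centroid_affine_gt0 (a : R) (w : V) :
  (forall x, U x -> 0 <= a + dotv x w) -> 0 < a + dotv x0 w ->
  0 < a + dotv (centroid U) w.
Proof.
move=> U_ge0 x0_gt0; have vol_gt0 := volume_cut_disk_gt0.
have := integralV_affine_indic_gt0 _ mU U_disk a w x0 _ e_gt0 x0_ball U_ge0 x0_gt0.
rewrite integralV_affine_indic // (_ : \sum_(j < _) _ = volume U * dotv (centroid U) w).
  by rewrite mulrC -mulrDr pmulr_rgt0.
rewrite /dotv mulr_sumr; apply: eq_bigr => j _; rewrite mxE.
by field; exact: lt0r_neq0.
Qed.

Lemma centroid_halfspace_gt p : p \in L -> p.2 < dotv (centroid U) p.1.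
Proof.
move=> pL; rewrite -subr_gt0 addrC; apply: centroid_affine_gt0.
  by move=> x [_ /allP /(_ p pL)]; rewrite addrC subr_ge0.
by rewrite addrC subr_gt0; exact: interior_halfspace_gt.
Qed.

Lemma centroid_open_disk : dotv (centroid U) (centroid U) < 1.
Proof.
set c := centroid U; set q := dotv c c.
suff : 0 < (1 + q) / 2 + dotv c (- c) by rewrite dotvNr -/q; lra.
apply: centroid_affine_gt0 => [x [x1 _]|]; rewrite dotvNr.
  by have := dotv2_le x c; rewrite -/q; lra.
by have := dotv2_le x0 c; have := interior_open_disk; rewrite -/q; lra.
Qed.

End Centroid.

Section CutDiskTopology.
Context {R : realType} {n : nat}.
Local Notation V := 'rV[R]_n.+1.
Variable L : seq (V * R).
Local Notation U := (cut_disk L).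
Local Notation D := (disk (R:=R) (n:=n)).

(* For a point outside the disk, the disk constraint is linearised at the point
   itself. *)
Lemma not_cut_disk_sep p : ~ U p ->
  exists w b, dotv p w < b /\ forall z, dotv z w < b -> ~ U z.
Proof.
move=> Np; case: (boolP (dotv p p <= 1)) => [p1|]; last first.
  rewrite -ltNge => p1; exists (- p), (- ((1 + dotv p p) / 2)); split.
    by rewrite dotvNr ltrN2; lra.
  by move=> z; rewrite dotvNr ltrN2 => zp [z1 _]; have := dotv2_le z p; lra.
case: (boolP (all (fun q => q.2 <= dotv p q.1) L)) => [pL|]; first by case: Np.
case/allPn => q qL; rewrite -ltNge => pq; exists q.1, q.2; split => // z zq.
by case=> _ /allP /(_ q qL); rewrite leNgt zq.
Qed.

Lemma not_closure_cut_disk p : ~ U p -> ~ closure U p.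
Proof.
move=> /not_cut_disk_sep[w [b [pb Nz]]] Up.
have [e e0 near] := dotv_lt_near _ _ _ pb.
have [z [Uz pz]] := Up _ (nbhsx_ballx p e e0).
exact: Nz (near z pz) Uz.
Qed.

Lemma strict_not_closure_compl y : all (fun p => p.2 < dotv y p.1) L ->
  ~ closure (D `\` U) y.
Proof.
move=> /all_gt_near[e e0 near] /(_ _ (nbhsx_ballx y e e0))[z [[Dz NUz] yz]].
by apply: NUz; split => //; apply: sub_all (near z yz) => q /= /ltW.
Qed.

End CutDiskTopology.

Section SegmentCrossing.
Context {R : realType} {n : nat}.
Local Notation V := 'rV[R]_n.+1.
Variables (L : seq (V * R)) (c s : V).
Local Notation U := (cut_disk L).
Local Notation D := (disk (R:=R) (n:=n)).
Hypotheses (c_disk : dotv c c < 1) (c_strict : all (fun p => p.2 < dotv c p.1) L).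
Hypotheses (s_sphere : dotv s s = 1) (s_out : ~ U s).

Definition seg (t : R) : V := (1 - t) *: s + t *: c.

Lemma dotv_seg t w : dotv (seg t) w = (1 - t) * dotv s w + t * dotv c w.
Proof. by rewrite dotvDl !dotvZl. Qed.

Lemma seg_disk t : 0 <= t <= 1 -> D (seg t).
Proof.
move=> /andP[t0 t1]; rewrite /disk /= dotv_seg /seg !dotvDr !dotvZr (dotvC c s).
have := dotv2_le s c; have : 0 <= t * (1 - t) by nra.
by rewrite s_sphere; move: c_disk; set cc := dotv c c; set sc := dotv s c; nra.
Qed.

Lemma seg_ball t t' e : `|t - t'| < e / 2 -> ball (seg t) e (seg t').
Proof.
move=> tt'; have e0 : 0 < e by have := normr_ge0 (t - t'); lra.
apply: coord_ball => // j; rewrite !mxE.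
have -> : (1 - t) * s 0 j + t * c 0 j - ((1 - t') * s 0 j + t' * c 0 j)
          = (t - t') * (c 0 j - s 0 j) by ring.
have : `|c 0 j - s 0 j| <= 2.
  apply: le_trans (ler_normB _ _) _.
  by have := coord_le1 _ j (ltW c_disk); have := @coord_le1 _ _ s j; rewrite s_sphere; lra.
by rewrite normrM => cs; apply: le_lt_trans (ler_wpM2l (normr_ge0 _) cs) _; lra.
Qed.

Lemma segE y : segment s c y <-> exists2 t, 0 <= t <= 1 & y = seg t.
Proof. by split=> [[t []]|[t]]; exists t. Qed.

Definition crossing_times := [set t : R | 0 <= t <= 1 /\ U (seg t)].
Definition crossing_time := inf crossing_times.
Local Notation t0 := crossing_time.

Lemma crossing_times1 : crossing_times 1.
Proof.
split; first by rewrite ler01 lexx.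
rewrite /seg subrr scale0r add0r scale1r; split; first exact: ltW.
by apply: sub_all c_strict => q /= /ltW.
Qed.

Lemma crossing_times_lb : lbound crossing_times 0.
Proof. by move=> t [/andP[]]. Qed.

Lemma crossing_time_le t : crossing_times t -> t0 <= t.
Proof. by move=> At; apply: ge_inf => //; exists 0; exact: crossing_times_lb. Qed.

Lemma crossing_time_ge0 : 0 <= t0.
Proof. by apply: lb_le_inf; [exists 1; exact: crossing_times1 | exact: crossing_times_lb]. Qed.

Lemma crossing_time_le1 : t0 <= 1.
Proof. exact/crossing_time_le/crossing_times1. Qed.

Lemma crossing_times_has_inf : has_inf crossing_times.
Proof. by split; [exists 1; exact: crossing_times1 | exists 0; exact: crossing_times_lb]. Qed.

(* [U] is closed: a separating inequality at [seg t0] would persist slightly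
   after [t0], where [seg] reaches [U] again. *)
Lemma cut_disk_crossing_time : U (seg t0).
Proof.
apply: contrapT => /not_cut_disk_sep[w [b [t0b Nz]]].
have [e e0 near] := dotv_lt_near _ _ _ t0b.
have e2 : 0 < e / 2 by rewrite divr_gt0.
have [t At tt0] := inf_adherent e2 crossing_times_has_inf.
have t0t := crossing_time_le _ At; case: At => _; apply/Nz/near/seg_ball.
by rewrite distrC ger0_norm ?subr_ge0 // ltrBlDl.
Qed.

Lemma crossing_time_gt0 : 0 < t0.
Proof.
rewrite lt_def crossing_time_ge0 andbT; apply/eqP => t00; apply: s_out.
by have := cut_disk_crossing_time; rewrite t00 /seg subr0 scale1r scale0r addr0.
Qed.

Lemma before_crossing_time t : 0 <= t -> t < t0 -> ~ U (seg t).
Proof.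
move=> t_ge0 tt0 Ut; have t1 := crossing_time_le1.
have : t0 <= t by apply: crossing_time_le; split => //; rewrite t_ge0 /=; lra.
by rewrite leNgt tt0.
Qed.

(* [t |-> <seg t, p.1> - p.2] is affine, nonnegative at [t0] and positive at [1]. *)
Lemma after_crossing_time t : t0 < t -> t <= 1 ->
  all (fun p => p.2 < dotv (seg t) p.1) L.
Proof.
move=> t0t t1; apply/allP => p pL; have [_ /allP /(_ p pL) /=] := cut_disk_crossing_time.
have /= := allP c_strict p pL; rewrite !dotv_seg.
set ds := dotv s p.1; set dc := dotv c p.1; set a := p.2 => ca t0a.
have : (1 - t0) * ((1 - t) * ds + t * dc - a) =
       (1 - t) * ((1 - t0) * ds + t0 * dc - a) + (t - t0) * (dc - a) by ring.
have : 0 <= (1 - t) * ((1 - t0) * ds + t0 * dc - a) by apply: mulr_ge0; lra.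
have : 0 < (t - t0) * (dc - a) by apply: mulr_gt0; lra.
move=> h1 h2 h3; have : 0 < (1 - t0) * ((1 - t) * ds + t * dc - a) by lra.
by rewrite pmulr_rgt0; lra.
Qed.

Lemma frontier_crossing_time : frontier_in D U (seg t0).
Proof.
have t0_gt0 := crossing_time_gt0; have t0_le1 := crossing_time_le1.
split; first by apply: seg_disk; rewrite crossing_time_ge0.
split; first exact/subset_closure/cut_disk_crossing_time.
move=> B /nbhs_ballP[e /= e0 eB].
set k := Num.min t0 (e / 4) / 2.
have k0 : 0 < k by rewrite divr_gt0 // lt_min t0_gt0 divr_gt0.
have kt0 : k <= t0 / 2 by rewrite ler_pdivrMr // divfK // ge_min lexx.
have ke : k <= e / 8.
  by rewrite ler_pdivrMr // (_ : e / 8 * 2 = e / 4) ?ge_min ?lexx ?orbT //; field.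
exists (seg (t0 - k)); split; last first.
  by apply/eB/seg_ball; rewrite opprB addrC subrK ger0_norm; lra.
split; first by apply: seg_disk; apply/andP; split; lra.
by apply: before_crossing_time; lra.
Qed.

Lemma frontier_seg t : 0 <= t <= 1 -> frontier_in D U (seg t) -> t = t0.
Proof.
move=> /andP[t_ge0 t1] [_ [Ut NUt]]; case: (ltgtP t t0) => // tt0.
  by case: (not_closure_cut_disk _ _ (before_crossing_time _ t_ge0 tt0) Ut).
by case: (strict_not_closure_compl _ _ (after_crossing_time _ tt0 t1) NUt).
Qed.

End SegmentCrossing.

Section RayFromCenter.
Context {R : realType} {n : nat}.
Local Notation V := 'rV[R]_n.+1.

Lemma ray_sphere_unique (c d : V) (m1 m2 : R) : dotv c c < 1 -> 0 < m1 -> 0 < m2 ->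
  dotv (c + m1 *: d) (c + m1 *: d) = 1 -> dotv (c + m2 *: d) (c + m2 *: d) = 1 ->
  m1 = m2.
Proof.
move=> c1 m1_gt0 m2_gt0; rewrite !dotvDl !dotvDr !dotvZl !dotvZr (dotvC d c).
have dd_ge0 := dotv_ge0 d; move: c1.
set cc := dotv c c; set cd := dotv c d; set dd := dotv d d => c1 E1 E2.
apply/eqP; apply: contraT => m12.
have : (m1 - m2) * (2 * cd + (m1 + m2) * dd) = 0 by nra.
move/eqP; rewrite mulf_eq0 subr_eq0 (negPf m12) /= => /eqP E.
have : 0 <= m1 * m2 * dd by rewrite !mulr_ge0 // ltW.
have : m1 * (2 * cd + (m1 + m2) * dd) = 0 by rewrite E mulr0.
nra.
Qed.

(* The endpoint [s] is recovered from [y] as [c + (1 - t)^-1 *: (y - c)]. *)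
Lemma segment_sphere_inj (c s1 s2 y : V) : dotv c c < 1 -> y != c ->
  dotv s1 s1 = 1 -> dotv s2 s2 = 1 -> segment s1 c y -> segment s2 c y -> s1 = s2.
Proof.
move=> c1 yc s1_1 s2_1 [t1 [/andP[_ t1_le1] y1]] [t2 [/andP[_ t2_le1] y2]].
have endpointE s t : y = (1 - t) *: s + t *: c -> t <= 1 ->
    0 < (1 - t)^-1 /\ s = c + (1 - t)^-1 *: (y - c).
  move=> ys t_le1; have t_lt1 : t < 1.
    rewrite lt_neqAle t_le1 andbT; apply: contraNneq yc => t1'.
    by rewrite ys t1' subrr scale0r add0r scale1r.
  split; first by rewrite invr_gt0 subr_gt0.
  apply/rowP => j; rewrite ys !mxE; field.
  by rewrite subr_eq0 gt_eqF.
have [m1_gt0 s1E] := endpointE _ _ y1 t1_le1.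
have [m2_gt0 s2E] := endpointE _ _ y2 t2_le1.
by rewrite s1E s2E (ray_sphere_unique c (y - c) _ _ c1 m1_gt0 m2_gt0) -?s1E -?s2E.
Qed.

End RayFromCenter.

Section Pieces.
Context {R : realType} {n : nat}.
Local Notation V := 'rV[R]_n.+1.

Lemma disk_cut_disk_nil : disk (R:=R) (n:=n) = cut_disk [::].
Proof. by apply/seteqP; split => x /=; [split | case]. Qed.

Lemma cut_disk_hplus (L : seq (V * R)) (P : ohyperplane R n) :
  cut_disk L `&` hplus P = cut_disk ((hnormal P, hoffset P) :: L).
Proof.
apply/seteqP; split => x /=; first by case=> [[x1 xL] xP]; split => //=; rewrite xP.
by case=> x1 /andP[xP xL]; split.
Qed.

Lemma cut_disk_hminus (L : seq (V * R)) (P : ohyperplane R n) :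
  cut_disk L `&` hminus P = cut_disk ((- hnormal P, - hoffset P) :: L).
Proof.
apply/seteqP; split => x /=.
  by case=> [[x1 xL] xP]; split => //=; rewrite dotvNr lerN2 xP.
by case=> x1 /andP[xP xL]; split => //; move: xP; rewrite /= dotvNr lerN2.
Qed.

Lemma pieces_cut_disk (t : ctree R n) (L : seq (V * R)) :
  unit_normals L -> valid_cleavage (cut_disk L) t -> interior (cut_disk L) !=set0 ->
  forall i, (i < size (pieces (cut_disk L) t))%N ->
  exists L', [/\ nth set0 (pieces (cut_disk L) t) i = cut_disk L', unit_normals L' &
                 interior (cut_disk L') !=set0].
Proof.
elim: t L => [|P l IHl r IHr] L uL /=; first by move=> _ intL [|//]; exists L.
rewrite cut_disk_hplus cut_disk_hminus => -[P1 intl intr vl vr] _ i.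
rewrite size_cat nth_cat => ilr; case: ltnP => [il|li].
  by apply: IHl => //; rewrite /unit_normals /= P1 eqxx.
apply: IHr => //; last by rewrite ltn_subLR.
by rewrite /unit_normals /= dotvNl dotvNr opprK P1 eqxx.
Qed.

Lemma disk_interior : interior (disk (R:=R) (n:=n)) !=set0.
Proof.
exists 0; apply/nbhs_ballP.
pose e : R := (n.+1%:R)^-1; have N_gt0 : 0 < n.+1%:R :> R by rewrite ltr0n.
have e0 : 0 < e by rewrite invr_gt0.
have e1 : e <= 1 by rewrite invr_le1 // ?ler1n // unitfE lt0r_neq0.
exists e => // x /ball_coord x0; rewrite /disk /= /dotv.
apply: le_trans (_ : \sum_(j < n.+1) e * e <= 1).
  apply: ler_sum => j _; have := x0 j; rewrite mxE sub0r normrN ltr_norml.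
  by case/andP; nra.
by rewrite sumr_const card_ord -mulr_natr -mulrA mulVf ?mulr1 // lt0r_neq0.
Qed.

End Pieces.

Section Blueprint.
Context {R : realType} {n : nat}.
Local Notation V := 'rV[R]_n.+1.
Variables (L : seq (V * R)) (c : V).
Hypotheses (c_disk : dotv c c < 1) (c_strict : all (fun p => p.2 < dotv c p.1) L).
Local Notation U := (cut_disk L).
Local Notation D := (disk (R:=R) (n:=n)).

Lemma segment_frontier_unique s : dotv s s = 1 -> ~ U s ->
  exists! y, segment s c y /\ frontier_in D U y.
Proof.
move=> s1 s_out; exists (seg c s (crossing_time L c s)); split.
  split; last exact: frontier_crossing_time.
  by apply/segE; exists (crossing_time L c s); rewrite ?crossing_time_ge0 ?crossing_time_le1.
move=> y [/segE[t t01 ->] yf]; congr seg; apply/esym; exact: frontier_seg.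
Qed.

Lemma segment_frontier_inj s1 s2 y : dotv s1 s1 = 1 -> dotv s2 s2 = 1 ->
  segment s1 c y -> frontier_in D U y -> segment s2 c y -> s1 = s2.
Proof.
move=> s1_1 s2_1 y1 [_ [_ yU]] y2.
apply: (segment_sphere_inj _ _ _ _ c_disk _ s1_1 s2_1 y1 y2).
by apply: contra_notN (strict_not_closure_compl _ _ c_strict) => /eqP <-.
Qed.

End Blueprint.

Lemma piece_centroid_interior {R : realType} {n : nat} (t : ctree R n) i :
  valid_cleavage (@disk R n) t -> (i < size (pieces (@disk R n) t))%N ->
  exists L, let c := centroid (cut_disk L) in
    [/\ nth set0 (pieces (@disk R n) t) i = cut_disk L, dotv c c < 1 &
        all (fun p => p.2 < dotv c p.1) L].
Proof.
have int0 : interior (@cut_disk R n [::]) !=set0.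
  by rewrite -disk_cut_disk_nil; exact: disk_interior.
rewrite disk_cut_disk_nil => valid it.
have [//|L [-> uL [x0 /nbhs_ballP[e /= e0 x0_ball]]]] := pieces_cut_disk _ _ _ valid int0 _ it.
exists L; split => //; first exact: centroid_open_disk x0_ball.
by apply/allP => p; exact: (@centroid_halfspace_gt R n L x0 e uL e0 x0_ball p).
Qed.

Theorem mainTheorem1 (R : realType) (n : nat) (t : ctree R n) :
  (1 <= n)%N ->
  valid_cleavage (@disk R n) t ->
  let Us := pieces (@disk R n) t in
  let beta : set 'rV[R]_n.+1 :=
    \bigcup_(i in [set i : nat | (i < size Us)%N]) frontier_in (@disk R n) (nth set0 Us i) in
  forall i : nat, (i < size Us)%N ->
    let U := nth set0 Us i in
    let c := centroid U in
    let C := @sphere R n `\` (U `&` @sphere R n) in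
    (* well-definedness: exactly one point on l(s,c) and on the frontier of U,
       and this point lies in the blueprint *)
    (forall s, C s ->
       (exists! y, segment s c y /\ frontier_in (@disk R n) U y) /\
       (forall y, segment s c y -> frontier_in (@disk R n) U y -> beta y)) /\
    (* injectivity of alpha on each connected component of C *)
    (forall s1 s2 y, C s1 -> C s2 -> connected_component C s1 s2 ->
       segment s1 c y -> frontier_in (@disk R n) U y ->
       segment s2 c y -> frontier_in (@disk R n) U y -> s1 = s2).
Proof.
move=> _ valid Us beta i iUs U c C.
have [L [UL c_disk c_strict]] := piece_centroid_interior _ _ valid iUs.
rewrite -/Us -/U in UL; rewrite /c /C UL in c_disk c_strict *.
split=> [s [s1 s_out]|s1 s2 y [s1_1 _] [s2_1 _] _ y1 y1f y2 _].
  split=> [|y _ yf]; last by exists i; rewrite //= -/Us -/U UL.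
  by apply: segment_frontier_unique => // sU; apply: s_out.
exact: segment_frontier_inj y1 y1f y2.
Qed.
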